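(* Let $n=4h$ with $h$ odd, let $D_n=\langle x,y\mid x^n=y^2=1,\ yxy^{-1}=x^{-1}\rangle$, and let $G=D_n\rtimes\langle\beta_2\rangle$ with $\langle \beta_2\rangle\cong\mathbb Z/2$, where conjugation by $\beta_2$ acts by $y\mapsto yx^2$, $x\mapsto x^{2h-1}$; let $H=D_n\times\{0\}$ (index 2 in $G$). Then for none of the cover types I, II, III-a, III-b does there exist an admissible homomorphism $f:T(m_1,\dots,m_r)\to G$.
   Context: For integers $m_1,\dots,m_r\ge 2$, $T(m_1,\dots,m_r):=\langle\gamma_1,\dots,\gamma_r\mid \gamma_1\cdots\gamma_r=1,\ \gamma_i^{m_i}=1\rangle$. Let $f_H:=\pi_H\circ f$, where $\pi_H:G\to G/H\cong\mathbb Z/2$ is the quotient map. A homomorphism $f:T(m_1,\dots,m_r)\to G$ is admissible for a given cover type if $f$ is surjective, $f(\gamma_i)$ has order exactly $m_i$, and: Cover type I: $r=6$, $(m_i)=(2,\dots,2)$, $f_H(\gamma_i)\ne 0$ for all $i$. Cover type II: $r=5$, $(m_i)=(2,2,2,2,c_5)$, $f_H(\gamma_i)\ne0$ for $i\le4$, $f_H(\gamma_5)=0$. Cover type III-a: $r=4$, $(m_i)=(2,2,2,2d_4)$ with $d_4>1$, $f_H(\gamma_i)\ne 0$ for all $i$. Cover type III-b: $r=4$, $(m_i)=(2,2,c_3,c_4)$ with $c_3\le c_4$, $c_4>2$, $f_H(\gamma_1),f_H(\gamma_2)\ne0$, $f_H(\gamma_3)=f_H(\gamma_4)=0$. *)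

From HB Require Import structures.
From mathcomp Require Import all_boot all_order all_algebra all_fingroup.
From mathcomp Require Import ring.
Set Implicit Arguments. Unset Strict Implicit. Unset Printing Implicit Defensive.
Import GRing.Theory.

(* An element of D_n is encoded as (a, b) : 'Z_n * bool, standing for x^a y^b *)
(* (with y x^a = x^-a y).  An element of G is encoded as (d, c), standing     *)
(* for d * beta_2^c.  Conjugation by beta_2 is the automorphism sigma of D_n  *)
(* with sigma x = x^(2h-1), sigma y = y x^2 = x^-2 y, i.e.                    *)
(*     sigma (x^a y^b) = x^(u a - 2 b) y^b,   u = 2h - 1.                     *)

Section Dihedral.
Variable h : nat.
Local Notation Zn := 'Z_(4 * h).
Local Open Scope ring_scope.

Definition Dn := (Zn * bool)%type.

(* dihedral multiplication: x^a1 y^b1 x^a2 y^b2 = x^(a1 +- a2) y^(b1+b2) *)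
Definition dmul (p q : Dn) : Dn :=
  (p.1 + (if p.2 then - q.1 else q.1), p.2 (+) q.2).
Definition dinv (p : Dn) : Dn := (if p.2 then p.1 else - p.1, p.2).
Definition d1 : Dn := (0, false).

Definition uu : Zn := (2 * h)%:R - 1.
Definition sigma (p : Dn) : Dn := (uu * p.1 - (2 * p.2)%:R, p.2).
Definition sig (c : bool) (p : Dn) : Dn := if c then sigma p else p.

Lemma four_h0 : (4 * h)%:R = 0 :> Zn.
Proof.
case: h => [|k]; first by rewrite muln0.
by apply: pchar_Zp; rewrite mulnS.
Qed.

Lemma uu_sq : uu * uu = 1.
Proof.
have E : 4 * (h%:R : Zn) = 0 by rewrite -four_h0 natrM.
rewrite /uu natrM.
transitivity (4 * (h%:R : Zn) * (h%:R - 1) + 1); first ring.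
by rewrite E mul0r add0r.
Qed.

Lemma uu2 : uu * 2 = -2.
Proof.
have E : 4 * (h%:R : Zn) = 0 by rewrite -four_h0 natrM.
rewrite /uu natrM.
transitivity (4 * (h%:R : Zn) - 2); first ring.
by rewrite E sub0r.
Qed.

Lemma dmulA : associative dmul.
Proof.
move=> [a1 b1] [a2 b2] [a3 b3]; rewrite /dmul /=.
by case: b1; case: b2; case: b3 => /=; congr (_, _); ring.
Qed.

Lemma dmul1 : left_id d1 dmul.
Proof. by move=> [a b]; rewrite /dmul /= add0r. Qed.

Lemma dmulV : left_inverse d1 dinv dmul.
Proof.
by move=> [a b]; rewrite /dmul /dinv /=; case: b => /=;
  rewrite ?addrN ?addNr ?addbb.
Qed.

Lemma sigmaM p q : sigma (dmul p q) = dmul (sigma p) (sigma q).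
Proof.
case: p q => [a1 b1] [a2 b2]; rewrite /sigma /dmul /=.
by case: b1; case: b2 => /=; congr (_, _); ring.
Qed.

Lemma sigmaK p : sigma (sigma p) = p.
Proof.
case: p => [a b]; rewrite /sigma /=; congr (_, _).
case: b => /=.
  rewrite muln1 mulrBr mulrA uu_sq mul1r uu2; ring.
by rewrite muln0 subr0 subr0 mulrA uu_sq mul1r.
Qed.

Lemma sig1 c : sig c d1 = d1.
Proof. by case: c; rewrite //= /sigma /d1 /= mulr0 subr0. Qed.

Lemma sigM c p q : sig c (dmul p q) = dmul (sig c p) (sig c q).
Proof. by case: c => //=; apply: sigmaM. Qed.

Lemma sigD c1 c2 p : sig (c1 (+) c2) p = sig c1 (sig c2 p).
Proof. by case: c1; case: c2 => //=; rewrite sigmaK. Qed.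

End Dihedral.

Record Gsd (h : nat) := MkG { gD : Dn h ; gc : bool }.

Definition Gsd_to h (g : Gsd h) : Dn h * bool := (gD g, gc g).
Definition Gsd_of h (p : Dn h * bool) : Gsd h := MkG p.1 p.2.
Lemma Gsd_toK h : cancel (@Gsd_to h) (@Gsd_of h).
Proof. by case. Qed.

HB.instance Definition _ h := Finite.copy (Gsd h) (can_type (@Gsd_toK h)).

Section Group.
Variable h : nat.

(* (d1 beta^c1) (d2 beta^c2) = d1 sigma^c1(d2) beta^(c1+c2) *)
Definition gmul (g k : Gsd h) : Gsd h :=
  MkG (dmul (gD g) (sig (gc g) (gD k))) (gc g (+) gc k).
Definition gone : Gsd h := MkG (d1 h) false.
Definition ginv (g : Gsd h) : Gsd h := MkG (sig (gc g) (dinv (gD g))) (gc g).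

Lemma gmulA : associative gmul.
Proof.
move=> [p1 c1] [p2 c2] [p3 c3]; rewrite /gmul /=.
by rewrite addbA sigM dmulA sigD.
Qed.

Lemma gmul1 : left_id gone gmul.
Proof. by move=> [p c]; rewrite /gmul /= dmul1. Qed.

Lemma gmulV : left_inverse gone ginv gmul.
Proof.
by move=> [p c]; rewrite /gmul /ginv /= -sigM dmulV sig1 addbb.
Qed.

HB.instance Definition _ := Finite_isGroup.Build (Gsd h) gmulA gmul1 gmulV.

End Group.

(* f_H(g) <> 0 iff g \notin H_sd h.                                           *)
Definition H_sd (h : nat) : {set Gsd h} := [set g | ~~ gc g].

Definition x_sd h : Gsd h := MkG (1%R, false) false.
Definition y_sd h : Gsd h := MkG (0%R, true) false.
Definition beta_sd h : Gsd h := MkG (0%R, false) true.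

(* A homomorphism f : T(m_1,...,m_r) -> G is given by the images           *)
(* gs = [:: f gamma_1; ...; f gamma_r] (the universal property of the       *)
(* presentation).  It is admissible (apart from the cover-type conditions)  *)
(* iff: the relations gamma_1...gamma_r = 1 hold (gamma_i^m_i = 1 follows   *)
(* from the order condition), f is surjective (the images generate G), and  *)
(* f(gamma_i) has order exactly m_i.                                        *)
Definition admissible_hom (gT : finGroupType) (gs : seq gT) (ms : seq nat) :
  Prop :=
  [/\ size gs = size ms,
      all (fun m => 1 < m) ms,
      (\prod_(g <- gs) g)%g = 1%g,
      <<[set g in gs]>>%g = [set: gT]
    & forall i, i < size gs -> #[nth 1%g gs i]%g = nth 0 ms i].

From HB Require Import structures.
From mathcomp Require Import all_boot all_order all_algebra all_fingroup.
Import GRing.Theory.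
Set Implicit Arguments. Unset Strict Implicit. Unset Printing Implicit Defensive.

(* The maps chi s t : x^a y^b beta^c |-> s a + t b (mod 2) are homomorphisms G -> Z/2:
   n is even, and beta acts on a mod 2 trivially.  Every involution outside H lies in
   all their kernels: modulo 4, 2h - 1 = 1, so beta acts as x^a y^b |-> x^(a-2b) y^b and
   (x^a y^b beta)^2 = 1 forces b = 0 and a even.  Every element lies in the kernel of
   one of the three nonzero chi s t.  In each cover type all generators but the last
   two are involutions outside H, so all generators but the last lie in the kernel of a
   nonzero chi s t; by the product relation so does the last one, and the generators
   lie in a proper subgroup. *)

Section AdmissibleGeneration.
Variable gT : finGroupType.

Lemma admissible_orders (gs : seq gT) ms :
  admissible_hom gs ms -> [seq #[g]%g | g <- gs] = ms.
Proof.
case=> size_gs _ _ _ ord_gs; apply: (@eq_from_nth _ 0); first by rewrite size_map.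
by move=> i; rewrite size_map => lt_i; rewrite (nth_map 1%g) // ord_gs.
Qed.

Lemma admissible_subG_prefix (K : {group gT}) gs x ms :
  admissible_hom (rcons gs x) ms -> {subset gs <= K} -> K = [set: gT] :> {set gT}.
Proof.
case=> _ _ prod1 gen_gs _ gsK.
have xK : x \in K.
  move/eqP: prod1; rewrite -cats1 big_cat big_seq1 /= -eq_invg_mul => /eqP <-.
  by rewrite groupV big_seq; apply: group_prod => g /gsK.
apply/eqP; rewrite eqEsubset subsetT -gen_gs gen_subG.
by apply/subsetP => g; rewrite inE mem_rcons inE => /predU1P[-> | /gsK].
Qed.

End AdmissibleGeneration.

Section ZpReduction.
Variables n d : nat.
Hypotheses (n_gt0 : 0 < n) (d_gt1 : 1 < d) (d_dvd_n : d %| n).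
Local Open Scope ring_scope.

Definition redZp (a : 'Z_n) : 'Z_d := (val a)%:R.

Lemma redZp_nat k : redZp k%:R = k%:R.
Proof.
have n_gt1 : (1 < n)%N by apply: leq_trans d_gt1 (dvdn_leq n_gt0 d_dvd_n).
apply: val_inj; rewrite /redZp /= !val_Zp_nat //.
by rewrite modn_dvdm.
Qed.

Lemma redZpD a b : redZp (a + b) = redZp a + redZp b.
Proof. by rewrite -[a]natr_Zp -[b]natr_Zp -natrD !redZp_nat natrD. Qed.

Lemma redZpM a b : redZp (a * b) = redZp a * redZp b.
Proof. by rewrite -[a]natr_Zp -[b]natr_Zp -natrM !redZp_nat natrM. Qed.

Lemma redZp0 : redZp 0 = 0.
Proof. exact: (redZp_nat 0). Qed.

Lemma redZpN a : redZp (- a) = - redZp a.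
Proof. by apply/eqP; rewrite -subr_eq0 opprK -redZpD addNr redZp0. Qed.

End ZpReduction.

Arguments redZp {n} d a.

Section Z4.
Local Open Scope ring_scope.

Lemma oddZ4D (z w : 'Z_4) : odd (z + w)%R = odd z (+) odd w.
Proof. by case: z w => [[|[|[|[|?]]]] ?] [[|[|[|[|?]]]] ?]. Qed.

Lemma oddZ4N (z : 'Z_4) : odd (- z)%R = odd z.
Proof. by case: z => [[|[|[|[|?]]]] ?]. Qed.

(* The left-hand side is the x-exponent of (x^a y^b beta)^2 reduced mod 4, for z = a mod 4. *)
Lemma Z4_sq_beta_eq0 (z : 'Z_4) (b : bool) :
  z + (if b then - (z - (2 * b)%:R) else z - (2 * b)%:R) = 0 -> ~~ b && ~~ odd z.
Proof. by case: b; case: z => [[|[|[|[|?]]]] ?]. Qed.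

End Z4.

Section Characters.
Variable h : nat.
Hypothesis h_odd : odd h.
Local Open Scope ring_scope.

Let n_gt0 : (0 < 4 * h)%N. Proof. by rewrite muln_gt0 (odd_gt0 h_odd). Qed.
Let four_dvd_n : (4 %| 4 * h)%N. Proof. exact: dvdn_mulr. Qed.
Let red_nat := redZp_nat n_gt0 (isT : (1 < 4)%N) four_dvd_n.
Let redD := redZpD n_gt0 (isT : (1 < 4)%N) four_dvd_n.
Let redM := redZpM n_gt0 (isT : (1 < 4)%N) four_dvd_n.
Let redN := redZpN n_gt0 (isT : (1 < 4)%N) four_dvd_n.

Lemma redZp_uuM a : redZp 4 (uu h * a) = redZp 4 a.
Proof.
have two_h : (2 * h)%:R = 2 :> 'Z_4.
  rewrite -(odd_double_half h) h_odd mulnDr -doubleMr -mul2n mulnA.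
  by rewrite natrD (natrM _ (2 * 2)) (@pchar_Zp 4) // mul0r addr0.
by rewrite redM /uu redD redN red_nat two_h (red_nat 1) (_ : 2 - 1 = 1) ?mul1r //; apply/eqP.
Qed.

Definition parity (a : 'Z_(4 * h)) : bool := odd (redZp 4 a).

Lemma parityD a b : parity (a + b) = parity a (+) parity b.
Proof. by rewrite /parity redD oddZ4D. Qed.

Lemma parityN a : parity (- a) = parity a.
Proof. by rewrite /parity redN oddZ4N. Qed.

Lemma parity_sig c (p : Dn h) : parity (sig c p).1 = parity p.1.
Proof.
case: c => //=; rewrite parityD parityN {2}/parity red_nat.
by rewrite /parity redZp_uuM; case: (p.2); rewrite /= addbF.
Qed.

Definition chi (s t : bool) (g : Gsd h) : bool :=
  (s && parity (gD g).1) (+) (t && (gD g).2).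

Lemma chiM s t : {morph chi s t : g k / (g * k)%g >-> g (+) k}.
Proof.
move=> [[a1 b1] c1] [p2 c2]; rewrite /chi /= /dmul /= parityD (fun_if parity) parityN if_same parity_sig.
have -> : (sig c1 p2).2 = p2.2 by case: c1.
by case: s t b1 (parity a1) (parity p2.1) (p2.2) => [] [] [] [] [] [].
Qed.

Definition chi_ker s t : {set Gsd h} := [set g | ~~ chi s t g].

Lemma group_set_chi_ker s t : group_set (chi_ker s t).
Proof.
apply/group_setP; split; first by rewrite inE /chi /parity /= !andbF.
by move=> g k; rewrite !inE chiM => /negbTE-> /negbTE->.
Qed.

Canonical chi_ker_group s t := Group (group_set_chi_ker s t).

Lemma chi_ker_neqT s t : s || t -> chi_ker s t != [set: Gsd h].
Proof.
case: s => [_ | /= ->]; apply/negP => /eqP kerT.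
  by have := in_setT (x_sd h); rewrite -kerT inE /chi /parity /= andbF.
by have := in_setT (y_sd h); rewrite -kerT inE.
Qed.

Lemma chi_ker_mem g : exists s t, (s || t) && (g \in chi_ker s t).
Proof.
exists (~~ parity (gD g).1 || (gD g).2), (parity (gD g).1); rewrite inE /chi.
by case: (parity _); case: (gD g).2.
Qed.

Lemma involution_notin_H_chi_ker s t g :
  g \notin H_sd h -> #[g]%g = 2 -> g \in chi_ker s t.
Proof.
move=> g_notin_H ord2.
have {ord2}sq1 : (g * g = 1)%g by rewrite -(expg_order g) ord2 expgS expg1.
move: g_notin_H sq1; case: g => [[a b] c]; rewrite inE negbK /= => -> sq1.
have := congr1 (fun g => redZp 4 (gD g).1) sq1.
rewrite /= /dmul /= !(redD, redN, fun_if (redZp 4)) !redZp_uuM red_nat (red_nat 0).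
move=> /Z4_sq_beta_eq0 /andP[/negbTE b0 /negbTE a_even].
by rewrite inE /chi /parity /= b0 a_even !andbF.
Qed.

Lemma no_admissible_involution_prefix gs k x ms :
  admissible_hom (rcons (rcons gs k) x) ms ->
  all (fun g => (g \notin H_sd h) && (#[g]%g == 2)) gs -> False.
Proof.
move=> adm /allP inv_gs; have [s [t /andP[st k_ker]]] := chi_ker_mem k.
move/eqP: (chi_ker_neqT st); apply.
apply: (admissible_subG_prefix (K := chi_ker_group s t) adm) => g.
rewrite mem_rcons inE => /predU1P[-> // | /inv_gs /andP[g_nH /eqP ord2]].
exact: involution_notin_H_chi_ker.
Qed.

End Characters.

Theorem lemma5p8 (h : nat) (h_odd : odd h) :
  (* Cover type I *)
  (~ exists g1 g2 g3 g4 g5 g6 : Gsd h,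
       admissible_hom [:: g1; g2; g3; g4; g5; g6] [:: 2; 2; 2; 2; 2; 2]
       /\ all (fun g => g \notin H_sd h) [:: g1; g2; g3; g4; g5; g6]) /\
  (* Cover type II *)
  (~ exists (g1 g2 g3 g4 g5 : Gsd h) (c5 : nat),
       admissible_hom [:: g1; g2; g3; g4; g5] [:: 2; 2; 2; 2; c5]
       /\ all (fun g => g \notin H_sd h) [:: g1; g2; g3; g4]
       /\ g5 \in H_sd h) /\
  (* Cover type III-a *)
  (~ exists (g1 g2 g3 g4 : Gsd h) (d4 : nat),
       1 < d4
       /\ admissible_hom [:: g1; g2; g3; g4] [:: 2; 2; 2; 2 * d4]
       /\ all (fun g => g \notin H_sd h) [:: g1; g2; g3; g4]) /\
  (* Cover type III-b *)
  (~ exists (g1 g2 g3 g4 : Gsd h) (c3 c4 : nat),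
       c3 <= c4 /\ 2 < c4
       /\ admissible_hom [:: g1; g2; g3; g4] [:: 2; 2; c3; c4]
       /\ g1 \notin H_sd h /\ g2 \notin H_sd h
       /\ g3 \in H_sd h /\ g4 \in H_sd h).
Proof.
have no_adm := no_admissible_involution_prefix h_odd.
split; [|split; [|split]].
- case=> g1 [g2 [g3 [g4 [g5 [g6 [adm /= /and5P[n1 n2 n3 n4 _]]]]]]].
  have [o1 o2 o3 o4 _ _] := admissible_orders adm.
  by apply: (no_adm [:: g1; g2; g3; g4] g5 g6 _ adm); rewrite /= n1 n2 n3 n4 o1 o2 o3 o4.
- case=> g1 [g2 [g3 [g4 [g5 [c5 [adm [/= /and4P[n1 n2 n3 _] _]]]]]]].
  have [o1 o2 o3 _ _] := admissible_orders adm.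
  by apply: (no_adm [:: g1; g2; g3] g4 g5 _ adm); rewrite /= n1 n2 n3 o1 o2 o3.
- case=> g1 [g2 [g3 [g4 [d4 [_ [adm /= /and4P[n1 n2 _ _]]]]]]].
  have [o1 o2 _ _] := admissible_orders adm.
  by apply: (no_adm [:: g1; g2] g3 g4 _ adm); rewrite /= n1 n2 o1 o2.
- case=> g1 [g2 [g3 [g4 [c3 [c4 [_ [_ [adm [n1 [n2 _]]]]]]]]]].
  have [o1 o2 _ _] := admissible_orders adm.
  by apply: (no_adm [:: g1; g2] g3 g4 _ adm); rewrite /= n1 n2 o1 o2.
Qed.
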